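(* In the $2^K$ factorial setup of the context, let $f\in\mathbb R^Q$, $f^\star=f[\mathbb M^\star]$, $v^2=f^\top V_{\hat Y}f$ and $v_{\mathrm R}^2=f^{\star\top}V_{\hat Y}f^\star$, and assume that both $\hat\gamma=f^\top\hat Y$ and $\hat\gamma_{\mathrm R}=f[\hat{\mathbb M}]^\top\hat Y$ (suitably standardized) converge to a normal distribution as $N\to\infty$. (i) If the eigenvectors of $V_{\hat Y}$ are given by the columns of the contrast matrix $G$ (i.e. $V_{\hat Y}=Q^{-1}G\Lambda G^\top$ for a diagonal $\Lambda$), then $v_{\mathrm R}^2/v^2\le1$. (ii) If $s^\star$ denotes the number of nonzero entries of $f$, then $v_{\mathrm R}^2/v^2\le\kappa(V_{\hat Y})\, s^\star|\mathbb M^\star|/Q$, where $\kappa(V)$ is the ratio of the largest to the smallest eigenvalue of $V$.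
   Context: $\mathcal T=\{0,1\}^K$, $Q=2^K$, lexicographic order. For $\mathcal K\subseteq[K]$, $g_{\mathcal K}(z)=\prod_{k\in\mathcal K}(2z_k-1)$, $g_\emptyset=\mathbf 1_Q$; $G$ the $Q\times Q$ matrix of columns $g_{\mathcal K}$ ($G^\top G=QI_Q$). For a set $\mathbb M$ of subsets of $[K]$, $f[\mathbb M]=Q^{-1}G(\cdot,\mathbb M)G(\cdot,\mathbb M)^\top f$, with $G(\cdot,\mathbb M)$ the columns indexed by $\mathbb M$. $N$ units with potential outcomes $Y_i(z)$, means $\bar Y(z)$, factorial effects $\tau_{\mathcal K}=Q^{-1}g_{\mathcal K}^\top\bar Y$; $\mathbb M^\star=\{\emptyset\}\cup\{\mathcal K\ne\emptyset:\tau_{\mathcal K}\neq0\}$. Completely randomized design with $N(z)\ge2$ units at level $z$; $\hat Y=(\hat Y(z))_z$ the vector of arm-wise sample means, $V_{\hat Y}$ its covariance matrix (assumed nonsingular). $\hat{\mathbb M}$ is a data-selected working model (output of forward screening). *)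

From HB Require Import structures.
From mathcomp Require Import all_boot all_order all_algebra.
From mathcomp Require Import reals.
Set Implicit Arguments. Unset Strict Implicit. Unset Printing Implicit Defensive.
Import Order.TTheory GRing.Theory Num.Theory.
Local Open Scope ring_scope.

Section Factorial.
Variables (R : realType) (K : nat).

(* Treatment levels z in {0,1}^K are indexed by 'I_(2^K) in lexicographic
   order: the first factor is the most significant bit. *)
Definition Q : nat := 2 ^ K.

Definition zbit (i : 'I_Q) (k : 'I_K) : bool := odd (i %/ 2 ^ (K - k.+1)).

Definition gvec (S : {set 'I_K}) : 'cV[R]_Q :=
  \col_i \prod_(k in S) (2 * (zbit i k)%:R - 1).

Definition proj (M : {set {set 'I_K}}) (f : 'cV[R]_Q) : 'cV[R]_Q :=
  (Q%:R)^-1 *: \sum_(S in M) (gvec S *m (gvec S)^T *m f).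

Definition qform (V : 'M[R]_Q) (f : 'cV[R]_Q) : R := ((f^T *m V *m f) 0 0).

Variable N : nat.
Variable Y : 'I_N -> 'I_Q -> R.

Definition Ybar : 'cV[R]_Q := \col_z ((N%:R)^-1 * \sum_i Y i z).

Definition tau (S : {set 'I_K}) : R := (Q%:R)^-1 * ((gvec S)^T *m Ybar) 0 0.

Definition Mstar : {set {set 'I_K}} := [set S | (S == set0) || (tau S != 0)].

Definition Scov (z z' : 'I_Q) : R :=
  ((N%:R - 1)^-1) * \sum_i (Y i z - Ybar z 0) * (Y i z' - Ybar z' 0).

(* covariance matrix of the vector of arm-wise sample means under the
   completely randomized design with N(z) = n z units at level z *)
Definition VYhat (n : 'I_Q -> nat) : 'M[R]_Q :=
  \matrix_(z, z') ((z == z')%:R * Scov z z / (n z)%:R - Scov z z' / N%:R).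

End Factorial.

Definition is_max_eig (R : realType) (m : nat) (V : 'M[R]_m) (a : R) : Prop :=
  eigenvalue V a /\ forall b, eigenvalue V b -> b <= a.
Definition is_min_eig (R : realType) (m : nat) (V : 'M[R]_m) (a : R) : Prop :=
  eigenvalue V a /\ forall b, eigenvalue V b -> a <= b.

From HB Require Import structures.
From mathcomp Require Import all_boot all_order all_algebra.
From mathcomp Require Import reals.
From mathcomp Require Import spectral complex.
From mathcomp Require Import ring zify.
Import Order.TTheory GRing.Theory Num.Theory.
Set Implicit Arguments. Unset Strict Implicit. Unset Printing Implicit Defensive.
Local Open Scope ring_scope.

(* The covariance matrix V is positive semidefinite: writing
   a_iz = h_z (Y_i(z) - Ybar(z)), the form h^T V h equals
   (N-1)^{-1} sum_i (sum_z a_iz^2 / N(z) - (sum_z a_iz)^2 / N), and each term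
   is nonnegative by Cauchy-Schwarz because sum_z N(z) = N.
   The contrast vectors have entries +-1 and satisfy g_S^T g_T = Q [S = T], so
   f[M] has contrast coefficients [S in M] g_S^T f and squared norm
   Q^{-1} sum_(S in M) (g_S^T f)^2.
   (i) If V = Q^{-1} G Lambda G^T then
   h^T V h = Q^{-1} sum_S Lambda_S (g_S^T h)^2 with Lambda_S >= 0, and passing
   from f to f* only drops terms of this sum.
   (ii) By the Rayleigh bounds v_R^2 <= lmax |f*|^2 and lmin |f|^2 <= v^2, where
   lmin > 0 as V is nonsingular and positive semidefinite, and
   Cauchy-Schwarz over the support of f gives (g_S^T f)^2 <= s* |f|^2, hence
   |f*|^2 <= |M*| s* |f|^2 / Q.  The Rayleigh bounds come from the spectral
   theorem for the Hermitian matrix V viewed over R[i]. *)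

Section CauchySchwarz.
Variables (R : realFieldType) (I : finType).

Lemma sqr_wsum_le (w b : I -> R) : (forall i, 0 <= w i) ->
  (\sum_i w i * b i) ^+ 2 <= (\sum_i w i) * \sum_i w i * b i ^+ 2.
Proof.
move=> w_ge0; set W := \sum_i w i; set m := \sum_i w i * b i.
have W_ge0 : 0 <= W by apply: sumr_ge0.
have [W0|W_neq0] := eqVneq W 0.
  have w0 i : w i = 0 by exact: (psumr_eq0P (fun j _ => w_ge0 j) W0 isT).
  have -> : m = 0 by rewrite /m big1 // => i _; rewrite w0 mul0r.
  by rewrite expr0n /= W0 mul0r.
have W_gt0 : 0 < W by rewrite lt_def W_neq0.
have var_eq : \sum_i w i * (W * b i - m) ^+ 2 =
               W * (W * \sum_i w i * b i ^+ 2 - m ^+ 2).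
  transitivity (\sum_i (W ^+ 2 * (w i * b i ^+ 2) - (2 * W * m) * (w i * b i)
                        + m ^+ 2 * w i)).
    by apply: eq_bigr => i _; ring.
  rewrite big_split sumrB /= -!mulr_sumr -/W -/m; ring.
have : 0 <= \sum_i w i * (W * b i - m) ^+ 2.
  by apply: sumr_ge0 => i _; rewrite mulr_ge0 ?sqr_ge0.
by rewrite var_eq pmulr_rge0 // subr_ge0.
Qed.

Lemma sqr_sum_le_sum_div (a m : I -> R) : (forall i, 0 < m i) ->
  (\sum_i a i) ^+ 2 <= (\sum_i m i) * \sum_i a i ^+ 2 / m i.
Proof.
move=> m_gt0.
have := @sqr_wsum_le m (fun i => a i / m i) (fun i => ltW (m_gt0 i)).
have m_neq0 i : m i != 0 by rewrite gt_eqF.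
congr (_ ^+ 2 <= _ * _); apply: eq_bigr => i _; first by rewrite mulrC divfK.
by rewrite expr2; field.
Qed.

End CauchySchwarz.

Lemma mx_quad_formE (R : pzRingType) n (A : 'M[R]_n) (h : 'cV[R]_n) :
  (h^T *m A *m h) 0 0 = \sum_i \sum_j h i 0 * A i j * h j 0.
Proof.
rewrite mxE exchange_big /=; apply: eq_bigr => j _.
by rewrite mxE mulr_suml; apply: eq_bigr => i _; rewrite mxE.
Qed.

Section Covariance.
Variables (R : realType) (K N : nat) (Y : 'I_N -> 'I_(Q K) -> R).
Variable n : 'I_(Q K) -> nat.
Hypothesis n_gt0 : forall z, (0 < n z)%N.
Hypothesis sum_n : (\sum_z n z)%N = N.

Let dev i z := Y i z - Ybar Y z 0.

Lemma Scov_sym z z' : Scov Y z z' = Scov Y z' z.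
Proof. by rewrite /Scov; congr (_ * _); apply: eq_bigr => i _; rewrite mulrC. Qed.

Lemma tr_VYhat : (VYhat Y n)^T = VYhat Y n.
Proof.
apply/matrixP => z z'; rewrite !mxE Scov_sym.
by case: (eqVneq z z') => [->|_] //; rewrite !mul0r.
Qed.

Lemma qform_VYhat h : qform (VYhat Y n) h = (N%:R - 1)^-1 *
  \sum_i (\sum_z (h z 0 * dev i z) ^+ 2 / (n z)%:R
          - (N%:R)^-1 * (\sum_z h z 0 * dev i z) ^+ 2).
Proof.
set c := (N%:R - 1)^-1.
have diag_part :
    \sum_z \sum_z' h z 0 * ((z == z')%:R * Scov Y z z / (n z)%:R) * h z' 0
    = c * \sum_i \sum_z (h z 0 * dev i z) ^+ 2 / (n z)%:R.
  rewrite [X in _ = c * X]exchange_big mulr_sumr; apply: eq_bigr => z _ /=.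
  rewrite (bigD1 z) //= big1 => [|z' z'z]; last first.
    by rewrite eq_sym (negbTE z'z) !mul0r mulr0 mul0r.
  rewrite eqxx mul1r addr0 /Scov -/c !(mulr_sumr, mulr_suml).
  apply: eq_bigr => i _; rewrite /dev; ring.
have cross_part : \sum_z \sum_z' h z 0 * Scov Y z z' * h z' 0
    = c * \sum_i (\sum_z h z 0 * dev i z) ^+ 2.
  have term z z' : h z 0 * Scov Y z z' * h z' 0 =
      c * \sum_i (h z 0 * dev i z) * (h z' 0 * dev i z').
    rewrite /Scov !(mulr_sumr, mulr_suml); apply: eq_bigr => i _.
    by rewrite /c /dev; ring.
  under eq_bigr do under eq_bigr do rewrite term.
  under eq_bigr do rewrite -mulr_sumr.
  rewrite -mulr_sumr; congr (c * _).
  under [RHS]eq_bigr do rewrite expr2 big_distrlr /=.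
  by rewrite [RHS]exchange_big; apply: eq_bigr => z _; rewrite exchange_big.
have entry z z' : h z 0 * VYhat Y n z z' * h z' 0 =
    h z 0 * ((z == z')%:R * Scov Y z z / (n z)%:R) * h z' 0
    - (N%:R)^-1 * (h z 0 * Scov Y z z' * h z' 0).
  by rewrite mxE; ring.
rewrite /qform mx_quad_formE.
under eq_bigr do under eq_bigr do rewrite entry.
under eq_bigr do rewrite sumrB -mulr_sumr.
by rewrite sumrB -mulr_sumr diag_part cross_part sumrB -mulr_sumr; ring.
Qed.

Lemma qform_VYhat_ge0 h : 0 <= qform (VYhat Y n) h.
Proof.
have N_gt0 : (0 < N)%N.
  have Q_pos : (0 < Q K)%N by rewrite expn_gt0.
  rewrite -sum_n (bigD1 (Ordinal Q_pos)) //=.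
  exact: leq_trans (n_gt0 _) (leq_addr _ _).
have N_pos : 0 < N%:R :> R by rewrite ltr0n.
rewrite qform_VYhat mulr_ge0 ?sumr_ge0 // => [|i _].
  by rewrite invr_ge0 subr_ge0 ler1n.
rewrite subr_ge0 ler_pdivrMl // -sum_n natr_sum.
by apply: sqr_sum_le_sum_div => z; rewrite ltr0n.
Qed.

End Covariance.

Lemma nat_bits_inj k a b : (a < 2 ^ k)%N -> (b < 2 ^ k)%N ->
  (forall m, (m < k)%N -> odd (a %/ 2 ^ m) = odd (b %/ 2 ^ m)) -> a = b.
Proof.
elim: k a b => [|k IHk] a b.
  by rewrite expn0 !ltnS !leqn0 => /eqP-> /eqP->.
move=> ltak ltbk eq_bits.
have eq_half : a./2 = b./2.
  apply: IHk; [by rewrite ltn_half_double -mul2n -expnS.. |].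
  by move=> m ltmk; have := eq_bits m.+1 ltmk; rewrite expnS !divnMA !divn2.
have := eq_bits 0%N (ltn0Sn k); rewrite expn0 !divn1 => eq_odd.
by rewrite -[a]odd_double_half -[b]odd_double_half eq_odd eq_half.
Qed.

Lemma mul_tr_col_sym (R : comPzRingType) n (u v : 'cV[R]_n) :
  (u^T *m v) 0 0 = (v^T *m u) 0 0.
Proof. by rewrite -[u^T *m v]trmxK trmx_mul trmxK mxE. Qed.

Lemma mul_tr_col_outer (R : pzRingType) n (u v h : 'cV[R]_n) :
  (u^T *m (v *m v^T *m h)) 0 0 = (u^T *m v) 0 0 * (v^T *m h) 0 0.
Proof. by rewrite -mulmxA mulmxA mxE big_ord1. Qed.

Section Contrasts.
Variables (R : realType) (K : nat).
Local Notation Q := (Q K).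
Local Notation gvec := (gvec R).

Lemma zbit_inj (i j : 'I_Q) : zbit i =1 zbit j -> i = j.
Proof.
move=> eq_bits; apply/val_inj/(@nat_bits_inj K); rewrite ?ltn_ord // => m ltmK.
have ltkK : (K - m.+1 < K)%N by lia.
have := eq_bits (Ordinal ltkK); rewrite /zbit /=.
by have -> : (K - (K - m.+1).+1)%N = m by lia.
Qed.

Definition bits (i : 'I_Q) : {ffun 'I_K -> bool} := [ffun k => zbit i k].

Lemma bits_bij : bijective bits.
Proof.
apply: inj_card_bij; last by rewrite card_ffun card_bool !card_ord.
by move=> i j /ffunP eq_ij; apply: zbit_inj => k; have := eq_ij k; rewrite !ffunE.
Qed.

Lemma reindex_bits (F : {ffun 'I_K -> bool} -> R) :
  \sum_(i < Q) F (bits i) = \sum_b F b.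
Proof. by rewrite (reindex bits) //; exact: onW_bij bits_bij. Qed.

Definition bit_sign (b : bool) : R := 2 * b%:R - 1.

Lemma bit_sign_sqr b : bit_sign b ^+ 2 = 1.
Proof. by case: b; rewrite /bit_sign /=; ring. Qed.

Lemma gvec_mul (S T : {set 'I_K}) (i : 'I_Q) : gvec S i 0 * gvec T i 0 =
  \prod_(k | (k \in S) != (k \in T)) bit_sign (zbit i k).
Proof.
rewrite !mxE big_mkcond [X in _ * X]big_mkcond -big_split [RHS]big_mkcond /=.
apply: eq_bigr => k _; rewrite /bit_sign.
by case: (k \in S); case: (k \in T);
  rewrite /= ?mulr1 ?mul1r // -expr2 -/(bit_sign _) bit_sign_sqr.
Qed.

Lemma gvec_sqr (S : {set 'I_K}) (i : 'I_Q) : gvec S i 0 ^+ 2 = 1.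
Proof. by rewrite expr2 gvec_mul big_pred0 // => k; rewrite eqxx. Qed.

Lemma gvec_dot (S T : {set 'I_K}) :
  ((gvec S)^T *m gvec T) 0 0 = (S == T)%:R * Q%:R.
Proof.
rewrite mxE; under eq_bigr do rewrite mxE gvec_mul.
have [<-|neqST] := eqVneq S T.
  rewrite (eq_bigr (fun=> 1)) => [|i _]; last first.
    by rewrite big_pred0 // => k; rewrite eqxx.
  by rewrite sumr_const card_ord mul1r.
have [k0 Sk0] : exists k0, (k0 \in S) != (k0 \in T).
  apply/existsP; apply: contraR neqST; rewrite negb_exists => /forallP eqST.
  by apply/eqP/setP => k; have := eqST k; rewrite negbK => /eqP.
pose F k b := if (k \in S) != (k \in T) then bit_sign b else 1.
transitivity (\sum_(i < Q) \prod_k F k (bits i k)).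
  apply: eq_bigr => i _; rewrite big_mkcond.
  by apply: eq_bigr => k _; rewrite ffunE.
rewrite (reindex_bits (fun b => \prod_k F k (b k))) -bigA_distr_bigA /=.
by rewrite (bigD1 k0) //= big_bool /F Sk0 /bit_sign /= mul0r; ring.
Qed.

Lemma Q_gt0 : 0 < Q%:R :> R.
Proof. by rewrite ltr0n expn_gt0. Qed.

Definition gcoef (h : 'cV[R]_Q) (S : {set 'I_K}) : R := ((gvec S)^T *m h) 0 0.

Lemma gcoef_proj (M : {set {set 'I_K}}) (f : 'cV[R]_Q) T :
  gcoef (proj M f) T = (T \in M)%:R * gcoef f T.
Proof.
rewrite /gcoef /proj -scalemxAr mxE mulmx_sumr summxE.
under eq_bigr do rewrite mul_tr_col_outer gvec_dot -mulrA.
rewrite big_mkcond (bigD1 T) //= big1 => [|S neST]; last first.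
  by rewrite eq_sym (negbTE neST) mul0r if_same.
rewrite eqxx mul1r addr0 mulrC; case: (T \in M); rewrite ?mul0r ?mulr0 //.
by rewrite mul1r mulrAC mulfV ?mul1r // gt_eqF ?Q_gt0.
Qed.

Definition contrast_diagmx (Lambda : {set 'I_K} -> R) : 'M[R]_Q :=
  Q%:R^-1 *: \sum_S Lambda S *: (gvec S *m (gvec S)^T).

Lemma qform_contrast_diagmx Lambda h :
  qform (contrast_diagmx Lambda) h = Q%:R^-1 * \sum_S Lambda S * gcoef h S ^+ 2.
Proof.
rewrite /qform -scalemxAr -scalemxAl mxE; congr (_ * _).
rewrite mulmx_sumr mulmx_suml summxE; apply: eq_bigr => S _.
rewrite -scalemxAr -scalemxAl mxE -mulmxA mul_tr_col_outer mul_tr_col_sym.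
by rewrite expr2.
Qed.

Lemma contrast_diagmx_psd_ge0 Lambda S :
  (forall h, 0 <= qform (contrast_diagmx Lambda) h) -> 0 <= Lambda S.
Proof.
move=> psd; have := psd (gvec S); rewrite qform_contrast_diagmx (bigD1 S) //=.
rewrite big1 => [|T neTS]; last first.
  by rewrite /gcoef gvec_dot (negbTE neTS) !mul0r expr0n mulr0.
rewrite /gcoef gvec_dot eqxx mul1r addr0 pmulr_rge0 ?invr_gt0 ?Q_gt0 //.
by rewrite pmulr_lge0 ?exprn_gt0 ?Q_gt0.
Qed.

Lemma qform_contrast_diagmx_proj_le Lambda M f : (forall S, 0 <= Lambda S) ->
  qform (contrast_diagmx Lambda) (proj M f) <= qform (contrast_diagmx Lambda) f.
Proof.
move=> Lambda_ge0; rewrite !qform_contrast_diagmx.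
apply: ler_wpM2l; first by rewrite invr_ge0 ltW ?Q_gt0.
apply: ler_sum => S _; rewrite gcoef_proj.
by case: (S \in M); rewrite ?mul1r // mul0r expr0n mulr0 mulr_ge0 ?sqr_ge0.
Qed.

Lemma sqnorm_proj (M : {set {set 'I_K}}) (f : 'cV[R]_Q) :
  ((proj M f)^T *m proj M f) 0 0 =
  Q%:R^-1 * \sum_(S in M) gcoef f S ^+ 2.
Proof.
rewrite {2}/proj -scalemxAr mxE mulmx_sumr summxE; congr (_ * _).
apply: eq_bigr => S MS.
rewrite mul_tr_col_outer mul_tr_col_sym -/(gcoef _ S) gcoef_proj MS.
by rewrite mul1r expr2.
Qed.

Lemma gcoef_sqr_le (f : 'cV[R]_Q) S :
  gcoef f S ^+ 2 <= #|[set i | f i 0 != 0]|%:R * (f^T *m f) 0 0.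
Proof.
pose supp i : R := (f i 0 != 0)%:R.
have -> : gcoef f S = \sum_i supp i * (gvec S i 0 * f i 0).
  rewrite /gcoef mxE; apply: eq_bigr => i _; rewrite mxE /supp.
  by case: eqP => [->|_]; rewrite ?mulr0 ?mul1r.
have card_supp : \sum_i supp i = #|[set i | f i 0 != 0]|%:R.
  rewrite -sum1_card natr_sum [RHS]big_mkcond; apply: eq_bigr => i _.
  by rewrite inE /supp; case: (f i 0 != 0).
have supp_sqr_le : \sum_i supp i * (gvec S i 0 * f i 0) ^+ 2 <= (f^T *m f) 0 0.
  rewrite mxE; apply: ler_sum => i _; rewrite exprMn gvec_sqr mul1r mxE /supp.
  by case: (f i 0 != 0); rewrite ?mul1r ?mul0r -expr2 ?sqr_ge0.
apply: le_trans (sqr_wsum_le _ (fun i => ler0n _ _)) _.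
by rewrite card_supp ler_wpM2l.
Qed.

Lemma sqnorm_proj_le (M : {set {set 'I_K}}) (f : 'cV[R]_Q) :
  ((proj M f)^T *m proj M f) 0 0 <=
  #|M|%:R * #|[set i | f i 0 != 0]|%:R * (f^T *m f) 0 0 / Q%:R.
Proof.
rewrite sqnorm_proj mulrC ler_wpM2r ?invr_ge0 ?ler0n //.
apply: le_trans (ler_sum _ (fun S _ => gcoef_sqr_le f S)) _.
by rewrite sumr_const -(mulr_natl (_ * _) #|M|) mulrA.
Qed.

End Contrasts.

Section SpectralDiag.
Variable C : numClosedFieldType.
Local Open Scope sesquilinear_scope.

Lemma eigenvalue_spectral_diag n (A : 'M[C]_n) j :
  A \is normalmx -> eigenvalue A (spectral_diag A 0 j).
Proof.
set P := spectralmx A => /orthomx_spectralP A_def; apply/eigenvalueP.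
have P_unit : P \in unitmx := spectral_unit A.
exists (row j P).
  rewrite -row_mul {1}A_def !mulmxA mulmxV // mul1mx row_mul row_diag_mx.
  by rewrite -scalemxAl -rowE.
apply/negP => /eqP Pj0; have := congr1 (mulmx^~ (invmx P)) Pj0.
rewrite -row_mul mulmxV // mul0mx => /rowP/(_ j); rewrite !mxE eqxx /=.
by move=> /eqP; rewrite oner_eq0.
Qed.

Lemma quad_form_conj_diag n (P : 'M[C]_n) (d : 'rV[C]_n) (z : 'cV[C]_n) :
  (z^t* *m (P^t* *m diag_mx d *m P) *m z) 0 0 =
  \sum_j d 0 j * `|(P *m z) j 0| ^+ 2.
Proof.
have -> : z^t* *m (P^t* *m diag_mx d *m P) *m z =
          (P *m z)^t* *m diag_mx d *m (P *m z).
  by rewrite trmx_mul map_mxM !mulmxA.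
rewrite mul_mx_diag mxE; apply: eq_bigr => j _.
by rewrite !mxE normCK mulrAC mulrC (mulrC _^*).
Qed.

End SpectralDiag.

Section RealSymmetric.
Variables (R : rcfType) (n : nat) (V : 'M[R]_n).
Hypothesis V_sym : V^T = V.
Local Open Scope sesquilinear_scope.
Local Notation toC := (real_complex R).

Lemma conj_real_complex (a : R) : (toC a)^* = toC a.
Proof. by rewrite conj_Creal // complex_real. Qed.

Lemma Re_real_complex (c : R[i]) : c \is Num.real -> toC (complex.Re c) = c.
Proof. exact: RRe_real. Qed.

Lemma conj_map_real m p (A : 'M[R]_(m, p)) : (map_mx toC A)^t* = map_mx toC A^T.
Proof. by apply/matrixP => i j; rewrite !mxE conj_real_complex. Qed.

Lemma hermsym_map_real : map_mx toC V \is hermsymmx.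
Proof.
by apply/is_hermitianmxP; rewrite expr0 scale1r conj_map_real V_sym.
Qed.

Lemma map_real_quad_form (A : 'M[R]_n) (x : 'cV[R]_n) :
  toC ((x^T *m A *m x) 0 0) =
  ((map_mx toC x)^t* *m map_mx toC A *m map_mx toC x) 0 0.
Proof. by rewrite conj_map_real -!map_mxM [RHS]mxE. Qed.

Lemma sym_quad_form_spectral (x : 'cV[R]_n) :
  exists w e : 'I_n -> R, [/\ forall j, 0 <= w j, forall j, eigenvalue V (e j),
    (x^T *m V *m x) 0 0 = \sum_j w j * e j & (x^T *m x) 0 0 = \sum_j w j].
Proof.
set Vc := map_mx toC V; set P := spectralmx Vc; set d := spectral_diag Vc.
have Vc_herm : Vc \is hermsymmx := hermsym_map_real.
have Vc_normal := hermitian_normalmx Vc_herm.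
have P_unitary : P \is unitarymx := spectral_unitarymx Vc.
have Vc_def : Vc = P^t* *m diag_mx d *m P.
  by rewrite -invmx_unitary //; apply/orthomx_spectralP.
have one_def : 1%:M = P^t* *m diag_mx (const_mx 1) *m P.
  by rewrite diag_const_mx mulmx1 mulmx1C //; apply/unitarymxP.
have d_real j : d 0 j \is Num.real.
  exact: mxOverP (hermitian_spectral_diag_real Vc_herm) 0 j.
set y := P *m map_mx toC x.
have ny_ge0 j : 0 <= `|y j 0| ^+ 2 by rewrite exprn_ge0.
exists (fun j => complex.Re (`|y j 0| ^+ 2)), (fun j => complex.Re (d 0 j)).
split.
- by move=> j; have := ny_ge0 j; rewrite lecE => /andP[].
- move=> j; have := eigenvalue_spectral_diag j Vc_normal.
  by rewrite -/d -[d 0 j]Re_real_complex // eigenvalue_map.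
- apply: complexI; rewrite map_real_quad_form -/Vc Vc_def quad_form_conj_diag.
  rewrite rmorph_sum; apply: eq_bigr => j _.
  rewrite -[d 0 j]Re_real_complex // -[`|_| ^+ 2]Re_real_complex ?ger0_real //.
  by rewrite rmorphM mulrC.
apply: complexI; rewrite -[x^T]mulmx1 map_real_quad_form map_mx1 one_def.
rewrite quad_form_conj_diag rmorph_sum; apply: eq_bigr => j _.
by rewrite -[`|_| ^+ 2]Re_real_complex ?ger0_real // mxE mul1r.
Qed.

Lemma quad_form_le_eig_ub (u : R) : (forall a, eigenvalue V a -> a <= u) ->
  forall x : 'cV_n, (x^T *m V *m x) 0 0 <= u * (x^T *m x) 0 0.
Proof.
move=> eig_le x; have [w [e [w_ge0 eig_e -> ->]]] := sym_quad_form_spectral x.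
by rewrite mulr_sumr; apply: ler_sum => j _; rewrite mulrC ler_wpM2r ?eig_le.
Qed.

Lemma quad_form_ge_eig_lb (l : R) : (forall a, eigenvalue V a -> l <= a) ->
  forall x : 'cV_n, l * (x^T *m x) 0 0 <= (x^T *m V *m x) 0 0.
Proof.
move=> eig_ge x; have [w [e [w_ge0 eig_e -> ->]]] := sym_quad_form_spectral x.
by rewrite mulr_sumr; apply: ler_sum => j _; rewrite mulrC ler_wpM2l ?eig_ge.
Qed.

End RealSymmetric.

Lemma eigenvalue_psd_unit_gt0 (R : realFieldType) n (V : 'M[R]_n) a :
  V \in unitmx -> (forall x : 'cV_n, 0 <= (x^T *m V *m x) 0 0) ->
  eigenvalue V a -> 0 < a.
Proof.
move=> V_unit V_psd /eigenvalueP[v vV v_neq0].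
have [j vj_neq0] : exists j, v 0 j != 0.
  apply/existsP; apply: contraR v_neq0 => /existsPn v0.
  by apply/eqP/rowP => j; rewrite mxE; apply/eqP/negPn/v0.
have vv_gt0 : 0 < (v *m v^T) 0 0.
  rewrite mxE (bigD1 j) //= ltr_pwDl ?sumr_ge0 // => [|k _].
    by rewrite mxE -expr2 exprn_even_gt0.
  by rewrite mxE -expr2 sqr_ge0.
have a_ge0 : 0 <= a.
  by have := V_psd v^T; rewrite trmxK vV -scalemxAl mxE pmulr_lge0.
rewrite lt_def a_ge0 andbT; apply: contra v_neq0 => /eqP a0.
by rewrite -[v]mulmx1 -(mulmxV V_unit) mulmxA vV a0 scale0r mul0mx.
Qed.

(* Since [y / 0 = 0], the case [z = 0] needs [0 <= x]. *)
Lemma ler_wpdivrMr (R : realFieldType) (z x y : R) :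
  0 <= x -> 0 <= z -> y <= x * z -> y / z <= x.
Proof.
move=> x_ge0 z_ge0 le_yxz; have [->|z_neq0] := eqVneq z 0.
  by rewrite invr0 mulr0.
by rewrite ler_pdivrMr // lt_def z_neq0.
Qed.

Theorem proposition1 (R : realType) (K N : nat) (Y : 'I_N -> 'I_(Q K) -> R)
    (n : 'I_(Q K) -> nat)
    (hn2 : forall z, (2 <= n z)%N)
    (hnN : (\sum_z n z)%N = N)
    (hV : VYhat Y n \in unitmx)
    (f : 'cV[R]_(Q K)) :
  let V := VYhat Y n in
  let fstar := proj (Mstar Y) f in
  let v2 := qform V f in
  let vR2 := qform V fstar in
  (* (i) eigenvectors of V are the contrast columns: V = Q^{-1} G Lambda G^T *)
  (forall Lambda : {set 'I_K} -> R,
     V = ((Q K)%:R)^-1 *: \sum_(S : {set 'I_K}) (Lambda S *: (gvec R S *m (gvec R S)^T)) ->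
     vR2 / v2 <= 1) /\
  (* (ii) bound via condition number *)
  (forall lmax lmin : R, is_max_eig V lmax -> is_min_eig V lmin ->
     vR2 / v2 <= (lmax / lmin) * (#|[set i | f i 0 != 0]|)%:R
                   * (#|Mstar Y|)%:R / (Q K)%:R).
Proof.
move=> V fstar v2 vR2.
have V_sym : V^T = V := tr_VYhat Y n.
have V_psd h : 0 <= qform V h := qform_VYhat_ge0 Y (fun z => ltnW (hn2 z)) hnN h.
split=> [Lambda V_def | lmax lmin [max_eig max_ub] [min_eig min_lb]].
  have {}V_def : V = contrast_diagmx Lambda := V_def.
  apply: ler_wpdivrMr; rewrite ?ler01 ?V_psd // mul1r /vR2 /v2 V_def.
  apply: qform_contrast_diagmx_proj_le => S.
  by apply: contrast_diagmx_psd_ge0 => h; rewrite -V_def.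
have lmin_gt0 : 0 < lmin := eigenvalue_psd_unit_gt0 hV V_psd min_eig.
have lmax_gt0 : 0 < lmax := lt_le_trans lmin_gt0 (max_ub _ min_eig).
set s := #|[set i | f i 0 != 0]|%:R; set m := #|Mstar Y|%:R.
set c := lmax / lmin * s * m / (Q K)%:R.
have c_ge0 : 0 <= c by rewrite !(divr_ge0, mulr_ge0) ?ler0n ?ltW ?Q_gt0.
apply: ler_wpdivrMr; rewrite ?V_psd //.
apply: le_trans (quad_form_le_eig_ub V_sym max_ub fstar) _.
apply: le_trans (ler_wpM2l (ltW lmax_gt0) (sqnorm_proj_le _ _)) _.
rewrite (_ : lmax * _ = c * (lmin * (f^T *m f) 0 0)); last first.
  by rewrite /c; field; rewrite !gt_eqF ?Q_gt0.
by apply: ler_wpM2l => //; apply: quad_form_ge_eig_lb.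
Qed.
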